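(* Assume $H$ is non-degenerate, i.e. $\lambda_N < \lambda_{N+1}$, and denote by $P_{\infty,\infty}$ the minimizer of $\min_{P} \operatorname{tr}(HP)$ subject to $\operatorname{tr} P = N$, $P = P^{\mathrm{T}}$, $0 \preceq P \preceq I$. Let $P_{\infty,\eta}$ be any minimizer of $\min_{P} \operatorname{tr}(HP) + \frac{1}{\eta}\|P\|_1$ subject to the same constraints. Then (a) $0 \le \mathcal{E}_{\infty,\infty}(P_{\infty,\eta}) - \mathcal{E}_{\infty,\infty}(P_{\infty,\infty}) \le \frac{1}{\eta}\|P_{\infty,\infty}\|_1$; (b) $\|P_{\infty,\eta} - P_{\infty,\infty}\|_F^2 \le \frac{2}{\eta}\frac{\|P_{\infty,\infty}\|_1}{\lambda_{N+1}-\lambda_N}$. In particular, $\lim_{\eta\to\infty}\mathcal{E}_{\infty,\infty}(P_{\infty,\eta}) = \mathcal{E}_{\infty,\infty}(P_{\infty,\infty})$ and $\lim_{\eta\to\infty}\|P_{\infty,\eta} - P_{\infty,\infty}\|_F = 0$.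
   Context: $H$ is an $n\times n$ real symmetric matrix (discrete Hamiltonian) with eigenpairs $\{\lambda_i,\phi_i\}_{i=1}^n$, eigenvalues ordered increasingly; $N$ is a positive integer (number of electrons). $\|P\|_1 = \sum_{i,j}|p_{ij}|$ denotes the entrywise $\ell_1$ norm of a matrix, $\|\cdot\|_F$ the Frobenius norm, and $A\preceq B$ means $B-A$ is symmetric positive semidefinite. The energy is $\mathcal{E}_{\infty,\infty}(P) = \operatorname{tr}(HP)$, and $\eta>0$ is the $\ell_1$ penalty parameter. The zero temperature minimizer is $P_{\infty,\infty} = \sum_{i=1}^N \phi_i\phi_i^{\mathrm{T}}$. *)

From HB Require Import structures.
From mathcomp Require Import all_boot all_order all_algebra.
From mathcomp Require Import all_classical all_reals all_analysis.
Set Implicit Arguments. Unset Strict Implicit. Unset Printing Implicit Defensive.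
Import Order.TTheory GRing.Theory Num.Theory.
Local Open Scope ring_scope.

Section Defs.
Variables (R : realType) (n : nat).

Definition psd (A : 'M[R]_n) : Prop :=
  A^T = A /\ forall v : 'cV[R]_n, 0 <= (v^T *m A *m v) 0 0.
Definition mx_le (A B : 'M[R]_n) : Prop := psd (B - A).

Definition l1norm (P : 'M[R]_n) : R := \sum_i \sum_j `|P i j|.
Definition frob (P : 'M[R]_n) : R := Num.sqrt (\sum_i \sum_j (P i j) ^+ 2).

Definition energy (H P : 'M[R]_n) : R := \tr (H *m P).

Definition feasible (N : nat) (P : 'M[R]_n) : Prop :=
  \tr P = N%:R /\ P^T = P /\ mx_le 0 P /\ mx_le P 1%:M.

Definition penalized (H : 'M[R]_n) (eta : R) (P : 'M[R]_n) : R :=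
  energy H P + eta^-1 * l1norm P.

Definition is_penalized_minimizer (H : 'M[R]_n) (N : nat) (eta : R)
    (P : 'M[R]_n) : Prop :=
  feasible N P /\ forall Q, feasible N Q -> penalized H eta P <= penalized H eta Q.

(* zero-temperature density matrix sum_{i<N} phi_i phi_i^T (0-based) *)
Definition P_zero (N : nat) (phi : nat -> 'cV[R]_n) : 'M[R]_n :=
  \sum_(i < N) phi i *m (phi i)^T.

End Defs.

From mathcomp Require Import all_boot all_order all_algebra.
From mathcomp Require Import all_classical all_reals all_analysis.
From mathcomp Require Import ring lra.
Import Order.TTheory GRing.Theory Num.Theory.
Import numFieldNormedType.Exports.
Local Open Scope classical_set_scope.
Local Open Scope ring_scope.

(* Work in the eigenbasis [phi]: for feasible [P] the numbers
   d_i = <phi i, P phi i> lie in [0, 1] and sum to N, while [P_zero] has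
   occupations b_i = [i < N].  Since sum_i (d_i - b_i) = 0, the energy excess
   sum_i lam_i (d_i - b_i) equals sum_i (lam_i - mu) (d_i - b_i) with mu the
   midpoint of the gap [lam N.-1, lam N], hence is at least
   (lam N - lam N.-1) / 2 * sum_i |d_i - b_i|.  As P^2 <= P, the squared
   Frobenius distance to [P_zero] is at most
   sum_i (d_i + b_i - 2 b_i d_i) = sum_i |d_i - b_i|.  Finally, minimality of
   the penalized objective against the feasible [P_zero] bounds the energy
   excess by eta^-1 times the l1 norm of [P_zero]. *)

Section QuadraticForm.
Context {R : realType} {n : nat}.
Implicit Types (X Y P A : 'M[R]_n) (v w : 'cV[R]_n).

Definition qform X v : R := (v^T *m X *m v) 0 0.

Lemma qformD X Y v : qform (X + Y) v = qform X v + qform Y v.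
Proof. by rewrite /qform mulmxDr mulmxDl mxE. Qed.

Lemma qformB X Y v : qform (X - Y) v = qform X v - qform Y v.
Proof. by rewrite /qform mulmxBr mulmxBl !mxE. Qed.

Lemma qform_sum (I : finType) (S : pred I) (F : I -> 'M[R]_n) v :
  qform (\sum_(i | S i) F i) v = \sum_(i | S i) qform (F i) v.
Proof. by rewrite /qform mulmx_sumr mulmx_suml summxE. Qed.

Lemma qform_mulmx X A v : qform X (A *m v) = qform (A^T *m X *m A) v.
Proof. by rewrite /qform trmx_mul !mulmxA. Qed.

Lemma qform_tr X v : qform X^T v = qform X v.
Proof. by rewrite /qform -[v]trmxK -!trmx_mul trmxK mulmxA mxE. Qed.

Lemma qform_outer w v : qform (w *m w^T) v = ((w^T *m v) 0 0) ^+ 2.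
Proof.
have vw : (v^T *m w) 0 0 = (w^T *m v) 0 0.
  by rewrite -[v^T *m w]trmxK trmx_mul trmxK mxE.
by rewrite /qform !mulmxA -(mulmxA (v^T *m w)) mxE big_ord1 expr2 vw.
Qed.

(* [P - P^2 = (1 - P) P (1 - P) + P (1 - P) P] is a sum of two psd matrices. *)
Lemma qform_sqr_le P v : P^T = P -> mx_le 0 P -> mx_le P 1%:M ->
  qform (P *m P) v <= qform P v.
Proof.
rewrite /mx_le subr0 => sP [_ P_ge0] [sIP IP_ge0].
rewrite -subr_ge0 -qformB.
have -> : P - P *m P = (1%:M - P)^T *m P *m (1%:M - P) + P^T *m (1%:M - P) *m P.
  rewrite sIP sP !mulmxBl !mulmxBr !mul1mx !mulmx1 -!mulmxA.
  by rewrite mulmxBl -mulmxA subrK.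
by rewrite qformD -!qform_mulmx; apply: addr_ge0; [apply: P_ge0 | apply: IP_ge0].
Qed.

Lemma frob_sqr A : A^T = A -> frob A ^+ 2 = \tr (A *m A).
Proof.
move=> sA; rewrite /frob sqr_sqrtr; last first.
  by apply: sumr_ge0 => i _; apply: sumr_ge0 => j _; apply: sqr_ge0.
rewrite /mxtrace; apply: eq_bigr => i _; rewrite mxE; apply: eq_bigr => j _.
by rewrite expr2 -{2}sA mxE.
Qed.

Lemma l1norm_ge0 P : 0 <= l1norm P.
Proof. by apply: sumr_ge0 => i _; apply: sumr_ge0. Qed.

End QuadraticForm.

Section OrthonormalBasis.
Context {R : realType} {n : nat} {phi : nat -> 'cV[R]_n}.
Hypothesis phi_ortho : forall i j : nat, (i < n)%N -> (j < n)%N ->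
  (phi i)^T *m phi j = ((i == j)%:R)%:M.
Implicit Types (X P : 'M[R]_n) (S : pred 'I_n).

Lemma sum_outer_phi : \sum_(i < n) phi i *m (phi i)^T = 1%:M.
Proof.
pose U : 'M[R]_n := \matrix_(r, c) phi c r 0.
have UtU : U^T *m U = 1%:M.
  apply/matrixP => i j; rewrite !mxE.
  have := congr1 (fun M : 'M[R]_1 => M 0 0) (@phi_ortho i j (ltn_ord i) (ltn_ord j)).
  rewrite /= !mxE eqxx mulr1n => <-.
  by apply: eq_bigr => k _; rewrite !mxE.
rewrite -(mulmx1C UtU); apply/matrixP => r s; rewrite !mxE summxE.
by apply: eq_bigr => k _; rewrite !mxE big_ord1 !mxE.
Qed.

Lemma mxtrace_qform X : \tr X = \sum_(i < n) qform X (phi i).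
Proof.
rewrite -{1}(mulmx1 X) -sum_outer_phi mulmx_sumr raddf_sum.
apply: eq_bigr => i _ /=.
by rewrite mulmxA mxtrace_mulC mulmxA trace_mx11.
Qed.

Lemma qform_phi1 (i : 'I_n) : qform 1%:M (phi i) = 1.
Proof. by rewrite /qform mulmx1 phi_ortho // eqxx mxE. Qed.

Definition proj S : 'M[R]_n := \sum_(i < n | S i) phi i *m (phi i)^T.

Lemma proj_sym S : (proj S)^T = proj S.
Proof. by rewrite /proj raddf_sum; apply: eq_bigr => i _ /=; rewrite trmx_mul trmxK. Qed.

Lemma proj_psd S : psd (proj S).
Proof.
split=> [|v]; first exact: proj_sym.
rewrite -/(qform _ v) qform_sum; apply: sumr_ge0 => i _.
by rewrite qform_outer sqr_ge0.
Qed.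

Lemma subr1_proj S : 1%:M - proj S = proj (predC S).
Proof. by rewrite -sum_outer_phi /proj (bigID S) /= addrAC subrr add0r. Qed.

Lemma proj_mulmx_phi S (i : 'I_n) : proj S *m phi i = (S i)%:R *: phi i.
Proof.
rewrite /proj mulmx_suml big_mkcond (bigD1 i) //= big1 ?addr0.
  rewrite -mulmxA phi_ortho // eqxx mul_mx_scalar.
  by case: (S i); rewrite ?scale1r ?scale0r.
move=> j ji; rewrite -mulmxA phi_ortho // mul_mx_scalar.
by rewrite (negbTE (ji : val j != val i)) scale0r if_same.
Qed.

Lemma qform_mulmx_proj X S (i : 'I_n) :
  qform (X *m proj S) (phi i) = (S i)%:R * qform X (phi i).
Proof.
by rewrite /qform mulmxA -(mulmxA _ (proj S)) proj_mulmx_phi -scalemxAr mxE.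
Qed.

Lemma qform_proj S (i : 'I_n) : qform (proj S) (phi i) = (S i)%:R.
Proof. by rewrite -[proj S]mul1mx qform_mulmx_proj qform_phi1 mulr1. Qed.

Lemma P_zero_proj {N} : (N <= n)%N -> P_zero N phi = proj (fun i => (i < N)%N).
Proof. by move=> leNn; rewrite /P_zero (big_ord_widen n (fun i => phi i *m (phi i)^T)). Qed.

Lemma feasible_P_zero {N} : (N <= n)%N -> feasible N (P_zero N phi).
Proof.
move=> leNn; rewrite /feasible /mx_le subr0 P_zero_proj // subr1_proj.
split; last by split; [exact: proj_sym | split; exact: proj_psd].
rewrite mxtrace_qform -[N in RHS]card_ord -sumr_const (big_ord_widen n (fun _ => 1)) //.
by rewrite [RHS]big_mkcond; apply: eq_bigr => i _; rewrite qform_proj; case: ifP.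
Qed.

End OrthonormalBasis.
Arguments proj {R n} phi S.

Definition occ {R : numDomainType} (N i : nat) : R := ((i < N)%N)%:R.

Lemma gap_sum_le {R : realFieldType} {n N : nat} {lam : nat -> R} {d : 'I_n -> R} :
  (forall i j : nat, (i <= j)%N -> (j < n)%N -> lam i <= lam j) ->
  (0 < N)%N -> (N < n)%N -> (forall i, 0 <= d i <= 1) ->
  \sum_i d i = \sum_(i < n) occ N i ->
  (lam N - lam N.-1) * \sum_(i < n) (d i + occ N i - 2 * (occ N i * d i))
    <= 2 * \sum_(i < n) lam i * (d i - occ N i).
Proof.
move=> lam_mono N_gt0 ltNn d01 sum_d.
have pointwise (i : 'I_n) : (lam N - lam N.-1) * (d i + occ N i - 2 * (occ N i * d i))
    <= 2 * (lam i * (d i - occ N i)) - (lam N + lam N.-1) * (d i - occ N i).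
  have /andP[d_ge0 d_le1] := d01 i; rewrite /occ; case: ltnP => iN /=.
    have : lam i <= lam N.-1.
      apply: lam_mono; first by rewrite -ltnS prednK.
      exact: leq_ltn_trans (leq_pred N) ltNn.
    nra.
  have : lam N <= lam i by apply: lam_mono.
  nra.
have := ler_sum (index_enum 'I_n) (fun i (_ : true) => pointwise i).
have centered : \sum_i (lam N + lam N.-1) * (d i - occ N i) = 0.
  by rewrite -mulr_sumr sumrB sum_d subrr mulr0.
rewrite sumrB centered subr0 -mulr_sumr => sum_le.
by rewrite [X in _ <= X]mulr_sumr.
Qed.

Lemma penalized_energy_le {R : realType} {n N : nat} {H : 'M[R]_n} {eta : R}
    {P Q : 'M[R]_n} :
  0 < eta -> is_penalized_minimizer H N eta P -> feasible N Q ->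
  energy H P - energy H Q <= eta^-1 * l1norm Q.
Proof.
move=> eta_gt0 [_ P_min] /P_min; rewrite /penalized.
have inv_ge0 : 0 <= eta^-1 by rewrite invr_ge0 ltW.
have := mulr_ge0 inv_ge0 (l1norm_ge0 P).
lra.
Qed.

Section GroundState.
Context {R : realType} {n : nat} {H : 'M[R]_n} {lam : nat -> R}
  {phi : nat -> 'cV[R]_n} {N : nat}.
Hypothesis phi_ortho : forall i j : nat, (i < n)%N -> (j < n)%N ->
  (phi i)^T *m phi j = ((i == j)%:R)%:M.
Hypothesis H_eigen : forall i : nat, (i < n)%N -> H *m phi i = lam i *: phi i.
Hypothesis lam_mono : forall i j : nat, (i <= j)%N -> (j < n)%N -> lam i <= lam j.
Hypothesis N_gt0 : (0 < N)%N.
Hypothesis ltNn : (N < n)%N.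

Local Notation P0 := (P_zero N phi).

Lemma energy_eigen P : energy H P = \sum_(i < n) lam i * qform P (phi i).
Proof.
rewrite /energy mxtrace_mulC (mxtrace_qform phi_ortho); apply: eq_bigr => i _.
by rewrite /qform mulmxA -(mulmxA _ H) H_eigen // -scalemxAr mxE.
Qed.

Lemma lam_gap_ge0 : 0 <= lam N - lam N.-1.
Proof. by rewrite subr_ge0; apply: lam_mono; [exact: leq_pred | exact: ltNn]. Qed.

Lemma energy_gap_frob P : feasible N P ->
  (lam N - lam N.-1) * frob (P - P0) ^+ 2 <= 2 * (energy H P - energy H P0).
Proof.
move=> [trP [symP [P_ge0 P_le1]]].
have [trP0 [symP0 _]] := feasible_P_zero phi_ortho (ltnW ltNn).
have P0E : P0 = proj phi (fun i => (i < N)%N) := P_zero_proj (ltnW ltNn).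
pose d (i : 'I_n) := qform P (phi i).
have frob_le : frob (P - P0) ^+ 2 <= \sum_i (d i + occ N i - 2 * (occ N i * d i)).
  rewrite frob_sqr; last by rewrite raddfB /= symP symP0.
  rewrite (mxtrace_qform phi_ortho); apply: ler_sum => i _.
  rewrite mulmxBl !mulmxBr !qformB -[P0 *m P]trmxK trmx_mul symP symP0 qform_tr.
  rewrite P0E !qform_mulmx_proj // qform_proj // -/(d i).
  have : qform (P *m P) (phi i) <= d i by apply: qform_sqr_le.
  by rewrite /occ; case: (i < N)%N => /=; lra.
have d01 i : 0 <= d i <= 1.
  move: P_ge0 P_le1; rewrite /mx_le subr0 => -[_ /(_ (phi i)) d_ge0] [_ /(_ (phi i))].
  by rewrite -/(qform _ _) qformB qform_phi1 // subr_ge0 => ->; rewrite andbT.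
have sum_d : \sum_i d i = \sum_(i < n) occ N i.
  rewrite -(mxtrace_qform phi_ortho) trP -trP0 (mxtrace_qform phi_ortho) P0E.
  by apply: eq_bigr => i _; rewrite qform_proj.
have dE : energy H P - energy H P0 = \sum_(i < n) lam i * (d i - occ N i).
  rewrite !energy_eigen P0E -sumrB; apply: eq_bigr => i _.
  by rewrite qform_proj // mulrBr.
rewrite dE; apply: le_trans _ (gap_sum_le lam_mono N_gt0 ltNn d01 sum_d).
exact: ler_wpM2l lam_gap_ge0 _ _ frob_le.
Qed.

Lemma energy_P_zero_le P : feasible N P -> energy H P0 <= energy H P.
Proof.
move=> /energy_gap_frob gap_frob.
have := mulr_ge0 lam_gap_ge0 (sqr_ge0 (frob (P - P0))).
lra.
Qed.

Lemma penalized_frob_le (gap_pos : lam N.-1 < lam N) eta P :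
  0 < eta -> is_penalized_minimizer H N eta P ->
  frob (P - P0) ^+ 2 <= 2 / eta * (l1norm P0 / (lam N - lam N.-1)).
Proof.
move=> eta_gt0 P_min.
have P0_feas := feasible_P_zero phi_ortho (ltnW ltNn).
have dE_le := penalized_energy_le eta_gt0 P_min P0_feas.
have -> : 2 / eta * (l1norm P0 / (lam N - lam N.-1))
        = 2 * (eta^-1 * l1norm P0) / (lam N - lam N.-1) by ring.
rewrite ler_pdivlMr ?subr_gt0 // mulrC; apply: le_trans (energy_gap_frob _ P_min.1) _.
by rewrite ler_wpM2l.
Qed.

End GroundState.

Lemma cvgy_le_div0 {R : realType} (f : R -> R) (C : R) :
  (forall x, 0 < x -> 0 <= f x <= C / x) -> f x @[x --> +oo] --> 0.
Proof.
move=> f_bound; apply/cvgrPdist_le => e e_gt0; near=> x.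
have x_gt0 : 0 < x by near: x; apply: nbhs_pinfty_gt; rewrite num_real.
have Ce_lt : C / e < x by near: x; apply: nbhs_pinfty_gt; rewrite num_real.
have /andP[f_ge0 f_le] := f_bound x x_gt0.
rewrite sub0r normrN ger0_norm //; apply: le_trans f_le _.
by rewrite ler_pdivrMr // mulrC -ler_pdivrMr // ltW.
Unshelve. all: by end_near.
Qed.

Lemma cvg0_sqr {T : Type} {F : set_system T} {FF : Filter F} {R : realType}
    (f : T -> R) :
  (forall x, 0 <= f x) -> f x ^+ 2 @[x --> F] --> 0 -> f x @[x --> F] --> 0.
Proof.
move=> f_ge0 f2_cvg.
have -> : f = (fun x => Num.sqrt (f x ^+ 2)).
  by apply: funext => x; rewrite sqrtr_sqr ger0_norm.
by rewrite -sqrtr0; apply: (cvg_comp _ _ f2_cvg); exact: sqrt_continuous.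
Qed.

Theorem theorem1 (R : realType) (n N : nat) (H : 'M[R]_n)
    (lam : nat -> R) (phi : nat -> 'cV[R]_n) :
  H^T = H ->
  (forall i : nat, (i < n)%N -> H *m phi i = lam i *: phi i) ->
  (forall i j : nat, (i < n)%N -> (j < n)%N ->
     (phi i)^T *m phi j = ((i == j)%:R)%:M) ->
  (forall i j : nat, (i <= j)%N -> (j < n)%N -> lam i <= lam j) ->
  (0 < N)%N -> (N < n)%N ->
  lam N.-1 < lam N ->
  let Pinf := P_zero N phi in
  (forall (eta : R) (P : 'M[R]_n), 0 < eta ->
     is_penalized_minimizer H N eta P ->
     (0 <= energy H P - energy H Pinf /\
      energy H P - energy H Pinf <= eta^-1 * l1norm Pinf) /\
     frob (P - Pinf) ^+ 2 <= 2 / eta * (l1norm Pinf / (lam N - lam N.-1)))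
  /\
  (forall Peta : R -> 'M[R]_n,
     (forall eta : R, 0 < eta -> is_penalized_minimizer H N eta (Peta eta)) ->
     (energy H (Peta eta) @[eta --> +oo] --> energy H Pinf) /\
     (frob (Peta eta - Pinf) @[eta --> +oo] --> 0)).
Proof.
move=> _ H_eigen phi_ortho lam_mono N_gt0 ltNn gap_pos Pinf.
have Pinf_feas : feasible N Pinf := feasible_P_zero phi_ortho (ltnW ltNn).
have dE_ge0 P : feasible N P -> 0 <= energy H P - energy H Pinf.
  by move=> /(energy_P_zero_le phi_ortho H_eigen lam_mono N_gt0 ltNn); rewrite subr_ge0.
have frob_le := penalized_frob_le phi_ortho H_eigen lam_mono N_gt0 ltNn gap_pos.
split=> [eta P eta_gt0 P_min | Peta Peta_min].
  split; last exact: frob_le.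
  by split; [exact: dE_ge0 P_min.1 | exact: penalized_energy_le P_min Pinf_feas].
split.
  apply/subr_cvg0/(@cvgy_le_div0 _ _ (l1norm Pinf)) => eta eta_gt0.
  have [Peta_feas _] := Peta_min eta eta_gt0.
  by rewrite dE_ge0 //= mulrC (penalized_energy_le eta_gt0 (Peta_min eta eta_gt0) Pinf_feas).
apply: cvg0_sqr => [eta | ]; first exact: sqrtr_ge0.
apply: (@cvgy_le_div0 _ _ (2 * (l1norm Pinf / (lam N - lam N.-1)))) => eta eta_gt0.
by rewrite sqr_ge0 mulrAC (frob_le _ _ eta_gt0 (Peta_min _ eta_gt0)).
Qed.
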